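(* Let $\pi(m)=(1/2)^m$ for $m\in\mathbb{N}^+$ (and $0$ otherwise), and let the proposal be $q(m,\{m+1\})=\theta=1-q(m,\{m-1\})$ for $m\in\mathbb{Z}$, $\theta\in(0,1)$. For $m,N\in\mathbb{N}^+$ let the weights be $$W_{m,N}=\frac{b_m-\varepsilon_m}{N}\,\mathrm{Bin}(N,s_m)+\varepsilon_m,$$ with $b_m=m$, $\varepsilon_m=m^{-(3-(m\bmod 3))}$, $\mathrm{Bin}(N,s)$ a binomial random variable with parameters $N$ and $s$, and $s_m\in[0,1]$ chosen so that $\mathbb{E}[W_{m,N}]=1$ (i.e. $s_m=\frac{1-\varepsilon_m}{b_m-\varepsilon_m}$ whenever $b_m\neq\varepsilon_m$). Then for every $N\in\mathbb{N}^+$ the chain generated by the noisy kernel $\tilde P_N$ is transient.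
   Context: Noisy Metropolis–Hastings kernel $\tilde P_N$: from state $m$, propose $Y\sim q(m,\cdot)$, draw independent weights $W\sim Q_{m,N}$, $U\sim Q_{Y,N}$ (the laws of $W_{m,N}$, $W_{Y,N}$), and move to $Y$ with probability $\min\{1,\frac{\pi(Y)q(Y,m)}{\pi(m)q(m,Y)}\cdot\frac{U}{W}\}$, otherwise stay at $m$ (proposals outside $\mathbb{N}^+$ are rejected). *)

From Stdlib Require Import Reals Lra Lia ZArith.
From Coquelicot Require Import Coquelicot.
Open Scope R_scope.

Definition pi_t (m : Z) : R := if (0 <? m)%Z then (1/2) ^ Z.to_nat m else 0.

Definition q_prop (theta : R) (m y : Z) : R :=
  if Z.eqb y (m + 1) then theta else if Z.eqb y (m - 1) then 1 - theta else 0.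

Definition b_w (m : nat) : R := INR m.
Definition eps_w (m : nat) : R := / (INR m ^ (3 - m mod 3)).

Definition binpmf (N : nat) (p : R) (k : nat) : R :=
  Binomial.C N k * p ^ k * (1 - p) ^ (N - k).

(** Value of W_{m,N} when Bin(N, s_m) = k. *)
Definition wval (N m k : nat) : R := (b_w m - eps_w m) / INR N * INR k + eps_w m.

Definition EW (N m : nat) (sm : R) : R :=
  sum_f_R0 (fun k => binpmf N sm k * wval N m k) N.

(** Acceptance probability of the noisy MH move m -> y:
    E[ min{1, pi(y)q(y,m)/(pi(m)q(m,y)) * U/W} ], W ~ Q_{m,N}, U ~ Q_{y,N}
    independent. *)
Definition accept (theta : R) (s : nat -> R) (N m y : nat) : R :=
  let zm := Z.of_nat m in let zy := Z.of_nat y in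
  sum_f_R0 (fun j => sum_f_R0 (fun k =>
     binpmf N (s m) j * binpmf N (s y) k *
     Rmin 1 ((pi_t zy * q_prop theta zy zm) / (pi_t zm * q_prop theta zm zy)
             * (wval N y k / wval N m j))) N) N.

(** Noisy MH kernel tilde P_N on the state space N^+ (encoded in nat; the
    unused state 0 is made absorbing and is never reached from N^+).
    Proposals outside N^+ (i.e. to 0) are rejected. *)
Definition PN (theta : R) (s : nat -> R) (N : nat) (m y : nat) : R :=
  match m with
  | O => if Nat.eqb y 0 then 1 else 0
  | S _ =>
    let up := q_prop theta (Z.of_nat m) (Z.of_nat (m + 1)) * accept theta s N m (m + 1) in
    let down := if (2 <=? m)%nat
                then q_prop theta (Z.of_nat m) (Z.of_nat (m - 1)) * accept theta s N m (m - 1)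
                else 0 in
    if Nat.eqb y (m + 1) then up
    else if Nat.eqb y m then 1 - up - down
    else if andb (2 <=? m)%nat (Nat.eqb y (m - 1)) then down
    else 0
  end.

Fixpoint nstep (P : nat -> nat -> R) (n : nat) (x z : nat) : R :=
  match n with
  | O => if Nat.eqb x z then 1 else 0
  | S n' => Series (fun y => nstep P n' x y * P y z)
  end.

Definition transient_chain (P : nat -> nat -> R) : Prop :=
  forall m : nat, (1 <= m)%nat -> ex_series (fun n => nstep P n m m).

(* The noisy kernel is a birth-death chain on N^+ with up-rates [u i] and down-rates [d i],
   so it is transient as soon as the products [rho j] of the ratios [d i / u i] are summable:
   the tail sums of [rho] are then a nonnegative superharmonic function whose defect at the
   starting state bounds the expected number of returns.
   Since [E W_i = 1] while [W_i >= (i - 1) / N] off its atom [eps_i], the atom has probability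
   [1 - O(N / i)], so the noise [U / W] in a move [i -> j] is essentially [eps_j / eps_i]. The
   exponent of [eps] cycles through 3, 2, 1: moving up multiplies the atom by a factor of order
   [i] unless [i = 2 mod 3], and moving down from [i <> 0 mod 3] divides it by a factor of order
   [i]. At [i = 2 mod 3] an up-move still succeeds with probability of order [1 / i], because
   [W_(i+1)] leaves its atom that often. Hence [d i / u i] is bounded, and [O(1 / i)] for
   [i = 1 mod 3], so eventually [rho] shrinks by a factor [8] every three steps. *)

From Stdlib Require Import Reals ZArith Lra Lia.
From Coquelicot Require Import Coquelicot.
Open Scope R_scope.

Lemma ex_series_of_bounded_partial_sums (a : nat -> R) (M : R) :
  (forall n, 0 <= a n) -> (forall n, sum_f_R0 a n <= M) -> ex_series a.
Proof.
  intros Ha HM.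
  assert (Hlim : ex_finite_lim_seq (sum_n a)).
  { apply ex_finite_lim_seq_incr with M.
    - intro n. rewrite !sum_n_Reals. simpl. specialize (Ha (S n)). lra.
    - intro n. rewrite sum_n_Reals. apply HM. }
  destruct Hlim as [l Hl]. exists l. exact Hl.
Qed.

Lemma sum_f_R0_vanishing_tail (f : nat -> R) a b :
  (a <= b)%nat -> (forall k, (a < k)%nat -> f k = 0) -> sum_f_R0 f b = sum_f_R0 f a.
Proof.
  intros Hab Hf. induction Hab as [|b Hab IH]; [reflexivity|].
  simpl. rewrite IH, Hf by lia. ring.
Qed.

Lemma Series_finite_support (a : nat -> R) (K : nat) :
  (forall k, (K < k)%nat -> a k = 0) -> Series a = sum_f_R0 a K.
Proof.
  intros Ha. unfold Series.
  rewrite (Lim_seq_ext_loc _ (fun _ => sum_f_R0 a K)).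
  - rewrite Lim_seq_const. reflexivity.
  - exists K. intros n Hn. rewrite sum_n_Reals. now apply sum_f_R0_vanishing_tail.
Qed.

Lemma sum_f_R0_term_le (f : nat -> R) K m :
  (m <= K)%nat -> (forall k, 0 <= f k) -> f m <= sum_f_R0 f K.
Proof.
  intros Hm Hf. induction Hm as [|K Hm IH].
  - destruct m as [|m]; simpl; [lra|].
    pose proof (cond_pos_sum f m Hf). lra.
  - simpl. specialize (Hf (S K)). lra.
Qed.

Lemma sum_f_R0_swap (a : nat -> nat -> R) K L :
  sum_f_R0 (fun i => sum_f_R0 (fun j => a i j) L) K =
  sum_f_R0 (fun j => sum_f_R0 (fun i => a i j) K) L.
Proof.
  induction K as [|K IH]; [reflexivity|].
  simpl. rewrite IH, <- sum_plus. reflexivity.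
Qed.

Lemma sum_f_R0_only_last (f : nat -> R) n :
  (forall k, (k < n)%nat -> f k = 0) -> sum_f_R0 f n = f n.
Proof.
  intros Hf. destruct n as [|n]; [reflexivity|].
  rewrite tech5, sum_eq_R0; [ring|]. intros k Hk. apply Hf. lia.
Qed.

Lemma sum_f_R0_delta (g : nat -> R) m K : (m <= K)%nat ->
  sum_f_R0 (fun y => if Nat.eqb m y then g y else 0) K = g m.
Proof.
  intros HmK. rewrite (sum_f_R0_vanishing_tail _ m K HmK).
  - rewrite sum_f_R0_only_last, Nat.eqb_refl; [reflexivity|].
    intros k Hk. destruct (Nat.eqb_spec m k); [lia | reflexivity].
  - intros k Hk. destruct (Nat.eqb_spec m k); [lia | reflexivity].
Qed.

(** * Transience from a superharmonic function *)

Lemma nstep_ext (P Q : nat -> nat -> R) :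
  (forall y z, P y z = Q y z) -> forall n x z, nstep P n x z = nstep Q n x z.
Proof.
  intros HPQ n. induction n as [|n IH]; intros x z; [reflexivity|].
  simpl. apply Series_ext. intro y. now rewrite IH, HPQ.
Qed.

Section Superharmonic.

Variable P : nat -> nat -> R.
Hypothesis P_nonneg : forall y z, 0 <= P y z.
Hypothesis P_skip_free : forall y z, (y + 1 < z)%nat -> P y z = 0.

Definition mean_next (V : nat -> R) (y : nat) : R :=
  sum_f_R0 (fun z => P y z * V z) (S y).

Lemma nstep_support m n z : (m + n < z)%nat -> nstep P n m z = 0.
Proof.
  revert z. induction n as [|n IH]; intros z Hz; simpl.
  - destruct (Nat.eqb_spec m z); [lia | reflexivity].
  - rewrite (Series_finite_support _ 0).
    + simpl. rewrite P_skip_free by lia. ring.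
    + intros k Hk. destruct (Compare_dec.le_lt_dec k (m + n)).
      * rewrite P_skip_free by lia. ring.
      * rewrite IH by lia. ring.
Qed.

Lemma nstep_S_finite m n z K : (m + n <= K)%nat ->
  nstep P (S n) m z = sum_f_R0 (fun y => nstep P n m y * P y z) K.
Proof.
  intros HK. apply Series_finite_support. intros k Hk.
  rewrite nstep_support by lia. ring.
Qed.

Lemma nstep_nonneg m n z : 0 <= nstep P n m z.
Proof.
  revert z. induction n as [|n IH]; intro z.
  - simpl. destruct (Nat.eqb m z); lra.
  - rewrite (nstep_S_finite m n z (m + n)) by lia.
    apply cond_pos_sum. intro y. apply Rmult_le_pos; auto.
Qed.

Lemma expected_value_drop (V : nat -> R) m n K : (m + n + 1 <= K)%nat ->
  sum_f_R0 (fun y => nstep P n m y * V y) K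
  - sum_f_R0 (fun y => nstep P (S n) m y * V y) K
  = sum_f_R0 (fun y => nstep P n m y * (V y - mean_next V y)) K.
Proof.
  intros HK.
  assert (Hnext : sum_f_R0 (fun z => nstep P (S n) m z * V z) K =
                  sum_f_R0 (fun y => nstep P n m y * mean_next V y) K).
  { transitivity (sum_f_R0 (fun z => sum_f_R0
                    (fun y => nstep P n m y * P y z * V z) K) K).
    - apply sum_eq. intros z _. rewrite (nstep_S_finite m n z K) by lia.
      rewrite Rmult_comm, scal_sum. apply sum_eq. intros; ring.
    - rewrite <- sum_f_R0_swap. apply sum_eq. intros y Hy.
      destruct (Compare_dec.le_lt_dec y (m + n)).
      + unfold mean_next.
        rewrite (sum_f_R0_vanishing_tail _ (S y) K) by
          (try lia; intros k Hk; rewrite P_skip_free by lia; ring).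
        rewrite scal_sum. apply sum_eq. intros; ring.
      + rewrite nstep_support by lia. rewrite Rmult_0_l.
        apply sum_eq_R0. intros; ring. }
  rewrite Hnext, <- minus_sum. apply sum_eq. intros; ring.
Qed.

(* Telescoping the drops bounds [c] times the expected number of visits to [m] by [V m]. *)
Lemma visits_of_superharmonic (V : nat -> R) (m : nat) (c : R) :
  (forall y, 0 <= V y) -> 0 < c ->
  (forall y, 0 <= V y - mean_next V y) ->
  c <= V m - mean_next V m ->
  ex_series (fun n => nstep P n m m).
Proof.
  intros HV Hc Hsup Hm.
  apply ex_series_of_bounded_partial_sums with (V m / c); [intro; apply nstep_nonneg|].
  intro T.
  set (K := (m + T + 1)%nat).
  set (EV := fun n => sum_f_R0 (fun y => nstep P n m y * V y) K).
  assert (Hdrop : forall n, (n <= T)%nat -> c * nstep P n m m <= EV n - EV (S n)).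
  { intros n Hn. unfold EV. rewrite expected_value_drop by lia.
    apply Rle_trans with (nstep P n m m * (V m - mean_next V m)).
    - rewrite Rmult_comm. apply Rmult_le_compat_l; [apply nstep_nonneg | exact Hm].
    - apply (sum_f_R0_term_le (fun y => nstep P n m y * (V y - mean_next V y))).
      + unfold K; lia.
      + intro k. apply Rmult_le_pos; [apply nstep_nonneg | apply Hsup]. }
  assert (Htel : forall n, (n <= T)%nat ->
            c * sum_f_R0 (fun i => nstep P i m m) n <= EV 0%nat - EV (S n)).
  { induction n as [|n IH]; intro Hn; [apply Hdrop; lia|].
    rewrite tech5, Rmult_plus_distr_l.
    specialize (IH ltac:(lia)). specialize (Hdrop (S n) Hn). lra. }
  assert (HEV0 : EV 0%nat = V m).
  { unfold EV. rewrite <- (sum_f_R0_delta V m K) by (unfold K; lia).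
    apply sum_eq. intros i _. simpl. destruct (Nat.eqb m i); ring. }
  assert (HEVpos : 0 <= EV (S T)).
  { apply cond_pos_sum. intro y. apply Rmult_le_pos; [apply nstep_nonneg | auto]. }
  specialize (Htel T (le_n _)).
  apply Rmult_le_reg_l with c; [exact Hc|].
  replace (c * (V m / c)) with (V m) by (field; lra). lra.
Qed.

End Superharmonic.

Lemma ex_series_of_contraction3 (a : nat -> R) (J : nat) :
  (forall j, 0 <= a j) -> (forall j, (J <= j)%nat -> a (j + 3)%nat <= a j / 8) ->
  ex_series a.
Proof.
  intros Ha Hstep.
  set (M := a J + 2 * a (J + 1)%nat + 4 * a (J + 2)%nat).
  assert (Hgeo : forall k, a (J + k)%nat <= M * (1/2) ^ k /\
                           a (J + k + 1)%nat <= M * (1/2) ^ (k + 1) /\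
                           a (J + k + 2)%nat <= M * (1/2) ^ (k + 2)).
  { induction k as [|k [H0 [H1 H2]]].
    - pose proof (Ha J). pose proof (Ha (J + 1)%nat). pose proof (Ha (J + 2)%nat).
      rewrite Nat.add_0_r. unfold M. simpl. lra.
    - replace (J + S k)%nat with (J + k + 1)%nat by lia.
      replace (J + k + 1 + 1)%nat with (J + k + 2)%nat by lia.
      replace (J + k + 1 + 2)%nat with (J + k + 3)%nat by lia.
      replace (S k + 1)%nat with (k + 2)%nat by lia.
      replace (S k + 2)%nat with (k + 3)%nat by lia.
      replace (S k) with (k + 1)%nat by lia.
      split; [exact H1|]. split; [exact H2|].
      pose proof (Hstep (J + k)%nat ltac:(lia)).
      rewrite pow_add in *. simpl in *. lra. }
  apply (ex_series_incr_n _ J).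
  apply (@ex_series_le R_AbsRing R_CompleteNormedModule _ (fun k => M * (1/2) ^ k)).
  - intro k. rewrite Rabs_pos_eq by apply Ha. apply Hgeo.
  - apply (ex_series_scal_l M (fun k => (1/2) ^ k)).
    apply ex_series_geom. rewrite Rabs_pos_eq; lra.
Qed.

Lemma one_of_three_residue_one j : exists k, (1 <= k <= 3)%nat /\ ((j + k) mod 3 = 1)%nat.
Proof.
  pose proof (Nat.div_mod j 3 ltac:(lia)) as Hdiv.
  pose proof (Nat.mod_upper_bound j 3 ltac:(lia)).
  destruct (j mod 3) as [|[|[|r]]] eqn:Hr; try lia.
  - exists 1%nat. split; [lia|]. symmetry. apply Nat.mod_unique with (j / 3)%nat; lia.
  - exists 3%nat. split; [lia|]. symmetry. apply Nat.mod_unique with (j / 3 + 1)%nat; lia.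
  - exists 2%nat. split; [lia|]. symmetry. apply Nat.mod_unique with (j / 3 + 1)%nat; lia.
Qed.

Lemma product3_le_of_one_small r1 r2 r3 B b :
  0 <= r1 <= B -> 0 <= r2 <= B -> 0 <= r3 <= B -> 0 <= b ->
  (r1 <= b \/ r2 <= b \/ r3 <= b) -> r1 * r2 * r3 <= B * B * b.
Proof.
  intros H1 H2 H3 Hb [H | [H | H]].
  - replace (B * B * b) with (b * B * B) by ring.
    repeat apply Rmult_le_compat; try lra. apply Rmult_le_pos; lra.
  - replace (B * B * b) with (B * b * B) by ring.
    repeat apply Rmult_le_compat; try lra. apply Rmult_le_pos; lra.
  - repeat apply Rmult_le_compat; try lra. apply Rmult_le_pos; lra.
Qed.

(** * Birth-death chains *)

Definition birth_death (u d : nat -> R) (y z : nat) : R :=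
  if Nat.eqb z (y + 1) then u y
  else if Nat.eqb z y then 1 - u y - d y
  else if Nat.eqb (z + 1) y then d y
  else 0.

Fixpoint down_up_product (u d : nat -> R) (m j : nat) : R :=
  match j with
  | O => 1
  | S j' => if (S j' <=? m)%nat then 1
            else down_up_product u d m j' * (d (S j') / u (S j'))
  end.

Section BirthDeath.

Variables u d : nat -> R.
Hypothesis u_nonneg : forall y, 0 <= u y.
Hypothesis d_nonneg : forall y, 0 <= d y.
Hypothesis u_d_le1 : forall y, u y + d y <= 1.
Hypothesis d0 : d 0%nat = 0.

Lemma birth_death_nonneg y z : 0 <= birth_death u d y z.
Proof.
  specialize (u_nonneg y). specialize (d_nonneg y). specialize (u_d_le1 y).
  unfold birth_death.
  destruct (Nat.eqb z (y + 1)); [lra|]. destruct (Nat.eqb z y); [lra|].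
  destruct (Nat.eqb (z + 1) y); lra.
Qed.

Lemma birth_death_skip_free y z : (y + 1 < z)%nat -> birth_death u d y z = 0.
Proof.
  intros Hz. unfold birth_death.
  destruct (Nat.eqb_spec z (y + 1)); [lia|]. destruct (Nat.eqb_spec z y); [lia|].
  destruct (Nat.eqb_spec (z + 1) y); [lia | reflexivity].
Qed.

Lemma birth_death_mean_next (V : nat -> R) y :
  mean_next (birth_death u d) V y =
  d y * V (y - 1)%nat + (1 - u y - d y) * V y + u y * V (S y).
Proof.
  unfold mean_next. destruct y as [|y].
  - unfold birth_death; simpl. rewrite d0. ring.
  - rewrite tech5, tech5, sum_f_R0_only_last.
    + unfold birth_death.
      replace (Nat.eqb y (S y + 1)) with false by (symmetry; apply Nat.eqb_neq; lia).
      replace (Nat.eqb y (S y)) with false by (symmetry; apply Nat.eqb_neq; lia).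
      replace (Nat.eqb (y + 1) (S y)) with true by (symmetry; apply Nat.eqb_eq; lia).
      replace (Nat.eqb (S y) (S y + 1)) with false by (symmetry; apply Nat.eqb_neq; lia).
      replace (Nat.eqb (S (S y)) (S y + 1)) with true by (symmetry; apply Nat.eqb_eq; lia).
      rewrite Nat.eqb_refl. replace (S y - 1)%nat with y by lia. ring.
    + intros k Hk. unfold birth_death.
      destruct (Nat.eqb_spec k (S y + 1)); [lia|]. destruct (Nat.eqb_spec k (S y)); [lia|].
      destruct (Nat.eqb_spec (k + 1) (S y)); [lia | ring].
Qed.

Variable m : nat.
Hypothesis u_pos : forall y, (m <= y)%nat -> 0 < u y.

Let rho := down_up_product u d m.

Lemma down_up_product_low j : (j <= m)%nat -> rho j = 1.
Proof.
  intros Hj. destruct j as [|j]; [reflexivity|].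
  change (rho (S j)) with (if (S j <=? m)%nat then 1 else rho j * (d (S j) / u (S j))).
  now replace (S j <=? m)%nat with true by (symmetry; apply Nat.leb_le; lia).
Qed.

Lemma down_up_product_high j : (m < S j)%nat -> rho (S j) = rho j * (d (S j) / u (S j)).
Proof.
  intros Hj.
  change (rho (S j)) with (if (S j <=? m)%nat then 1 else rho j * (d (S j) / u (S j))).
  now replace (S j <=? m)%nat with false by (symmetry; apply Nat.leb_gt; lia).
Qed.

Lemma down_up_product_nonneg j : 0 <= rho j.
Proof.
  induction j as [|j IH]; [unfold rho; simpl; lra|].
  destruct (Compare_dec.le_lt_dec (S j) m).
  - rewrite down_up_product_low by lia. lra.
  - rewrite down_up_product_high by lia.
    apply Rmult_le_pos; [exact IH|]. apply Rdiv_le_0_compat; auto. apply u_pos; lia.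
Qed.

Lemma down_up_ratio_nonneg i : (m <= i)%nat -> 0 <= d i / u i.
Proof. intros Hi. apply Rdiv_le_0_compat; auto. Qed.

(* Among three consecutive ratios one has index [1 mod 3] and is [O(1/i)], so [rho] decays by a
   factor [8] every three steps. *)
Lemma down_up_product_summable (I0 : nat) (B : R) :
  (forall i, (I0 <= i)%nat -> d i / u i <= B) ->
  (forall i, (I0 <= i)%nat -> (i mod 3 = 1)%nat -> d i / u i <= B / INR i) ->
  ex_series rho.
Proof.
  intros HB HB1.
  assert (HB0 : 0 <= B).
  { apply Rle_trans with (d (I0 + m)%nat / u (I0 + m)%nat).
    - apply down_up_ratio_nonneg; lia.
    - apply HB; lia. }
  destruct (INR_unbounded (8 * (B * B * B))) as [K HK].
  set (J := Nat.max (Nat.max I0 (m + 1)) K).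
  apply ex_series_of_contraction3 with J; [exact down_up_product_nonneg|].
  intros j Hj. unfold J in Hj.
  set (r := fun i => d i / u i).
  assert (Hr : forall i, (j + 1 <= i)%nat -> 0 <= r i <= B) by
    (intros i Hi; split; [apply down_up_ratio_nonneg | apply HB]; lia).
  assert (Hpos : 0 < INR (j + 1)) by (apply lt_0_INR; lia).
  assert (Hsmall : r (j + 1)%nat <= B / INR (j + 1) \/ r (j + 2)%nat <= B / INR (j + 1)
                   \/ r (j + 3)%nat <= B / INR (j + 1)).
  { assert (Hmono : forall i, (j + 1 <= i)%nat -> (i mod 3 = 1)%nat -> r i <= B / INR (j + 1)).
    { intros i Hi Hmod. apply Rle_trans with (B / INR i); [apply HB1; lia|].
      apply Rmult_le_compat_l; [exact HB0|].
      apply Rinv_le_contravar; [exact Hpos | apply le_INR; lia]. }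
    destruct (one_of_three_residue_one j) as [k [Hk Hmod]].
    destruct (Nat.eq_dec k 1) as [->|]; [left; apply Hmono; auto; lia|].
    destruct (Nat.eq_dec k 2) as [->|]; [right; left; apply Hmono; auto; lia|].
    replace k with 3%nat in Hmod by lia. right; right; apply Hmono; auto; lia. }
  assert (Hprod : r (j + 1)%nat * r (j + 2)%nat * r (j + 3)%nat <= 1 / 8).
  { eapply Rle_trans.
    - apply (product3_le_of_one_small _ _ _ B (B / INR (j + 1))); try (apply Hr; lia).
      + apply Rdiv_le_0_compat; lra.
      + exact Hsmall.
    - assert (INR K <= INR (j + 1)) by (apply le_INR; lia).
      apply Rmult_le_reg_r with (INR (j + 1)); [exact Hpos|].
      replace (B * B * (B / INR (j + 1)) * INR (j + 1)) with (B * B * B) by (field; lra).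
      lra. }
  replace (j + 3)%nat with (S (S (S j))) by lia.
  rewrite !down_up_product_high by lia.
  replace (S j) with (j + 1)%nat by lia. replace (S (j + 1)) with (j + 2)%nat by lia.
  replace (S (j + 2)) with (j + 3)%nat by lia. fold (r (j + 1)%nat) (r (j + 2)%nat) (r (j + 3)%nat).
  pose proof (down_up_product_nonneg j).
  replace (rho j * r (j + 1)%nat * r (j + 2)%nat * r (j + 3)%nat)
    with (rho j * (r (j + 1)%nat * r (j + 2)%nat * r (j + 3)%nat)) by ring.
  apply Rle_trans with (rho j * (1 / 8)); [apply Rmult_le_compat_l; auto | lra].
Qed.

Hypothesis rho_summable : ex_series rho.

(* The tail sums of [rho] form the classical superharmonic function of a transient birth-death
   chain: harmonic away from [m], constant below [m], with defect [u m] at [m]. *)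
Let V (y : nat) : R := Series (fun k => rho (Nat.max y m + k)).

Lemma tail_potential_low y : (y <= m)%nat -> V y = V m.
Proof. intros Hy. unfold V. now rewrite Nat.max_r, Nat.max_id by lia. Qed.

Lemma tail_potential_step y : (m <= y)%nat -> V y = rho y + V (S y).
Proof.
  intros Hy. unfold V. rewrite !Nat.max_l by lia.
  rewrite Series_incr_1 by (apply (ex_series_incr_n rho); exact rho_summable).
  rewrite Nat.add_0_r. f_equal. apply Series_ext. intro k. f_equal. lia.
Qed.

Lemma tail_potential_nonneg y : 0 <= V y.
Proof.
  unfold V. replace 0 with (Series (fun _ => 0)) at 1
    by (rewrite (Series_finite_support _ 0); reflexivity).
  apply Series_le.
  - intro k. split; [lra | apply down_up_product_nonneg].
  - apply (ex_series_incr_n rho). exact rho_summable.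
Qed.

Lemma tail_potential_defect y :
  V y - mean_next (birth_death u d) V y = if Nat.eqb y m then u m else 0.
Proof.
  rewrite birth_death_mean_next.
  destruct (Compare_dec.lt_eq_lt_dec y m) as [[Hlt | ->] | Hgt].
  - replace (Nat.eqb y m) with false by (symmetry; apply Nat.eqb_neq; lia).
    rewrite (tail_potential_low (y - 1)), (tail_potential_low y), (tail_potential_low (S y))
      by lia. ring.
  - rewrite Nat.eqb_refl, (tail_potential_low (m - 1)), (tail_potential_step m) by lia.
    rewrite down_up_product_low by lia. ring.
  - replace (Nat.eqb y m) with false by (symmetry; apply Nat.eqb_neq; lia).
    destruct y as [|y]; [lia|].
    replace (S y - 1)%nat with y by lia.
    rewrite (tail_potential_step y), (tail_potential_step (S y)), down_up_product_high by lia.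
    assert (0 < u (S y)) by (apply u_pos; lia).
    field. lra.
Qed.

Lemma birth_death_transient : ex_series (fun n => nstep (birth_death u d) n m m).
Proof.
  apply (visits_of_superharmonic _ birth_death_nonneg birth_death_skip_free V m (u m)).
  - exact tail_potential_nonneg.
  - apply u_pos; lia.
  - intro y. rewrite tail_potential_defect.
    destruct (Nat.eqb y m); [apply Rlt_le, u_pos; lia | lra].
  - rewrite tail_potential_defect, Nat.eqb_refl. lra.
Qed.

End BirthDeath.

Definition delta0 (j : nat) : R := if Nat.eqb j 0 then 1 else 0.

Lemma sum_f_R0_delta0 (u : nat -> R) N : sum_f_R0 (fun j => u j * delta0 j) N = u 0%nat.
Proof.
  induction N as [|N IH]; [unfold delta0; simpl; ring|].
  rewrite tech5, IH. unfold delta0. simpl. ring.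
Qed.

Lemma sum_f_R0_affine_delta0 (u : nat -> R) N a b :
  sum_f_R0 (fun k => u k * (a + b * delta0 k)) N = a * sum_f_R0 u N + b * u 0%nat.
Proof.
  rewrite <- (sum_f_R0_delta0 u N), !scal_sum, <- sum_plus. apply sum_eq. intros; ring.
Qed.

Definition expect2 (u v : nat -> R) (N : nat) (f : nat -> nat -> R) : R :=
  sum_f_R0 (fun j => sum_f_R0 (fun k => u j * v k * f j k) N) N.

Definition mh_accept (r : R) (wx wy : nat -> R) (j k : nat) : R := Rmin 1 (r * (wy k / wx j)).

Section Expect2.

Variables (u v : nat -> R) (N : nat).
Hypothesis u_nonneg : forall j, (j <= N)%nat -> 0 <= u j.
Hypothesis v_nonneg : forall k, (k <= N)%nat -> 0 <= v k.
Hypothesis u_sum : sum_f_R0 u N = 1.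
Hypothesis v_sum : sum_f_R0 v N = 1.

Lemma expect2_le f g : (forall j k, (j <= N)%nat -> (k <= N)%nat -> f j k <= g j k) ->
  expect2 u v N f <= expect2 u v N g.
Proof.
  intros Hfg. apply sum_Rle. intros j Hj. apply sum_Rle. intros k Hk.
  apply Rmult_le_compat_l; [apply Rmult_le_pos|]; auto.
Qed.

Lemma expect2_prod (phi psi : nat -> R) :
  expect2 u v N (fun j k => phi j * psi k) =
  sum_f_R0 (fun j => u j * phi j) N * sum_f_R0 (fun k => v k * psi k) N.
Proof.
  unfold expect2.
  transitivity (sum_f_R0 (fun j => u j * phi j * sum_f_R0 (fun k => v k * psi k) N) N).
  - apply sum_eq. intros j _. rewrite scal_sum. apply sum_eq. intros; ring.
  - rewrite (Rmult_comm (sum_f_R0 _ N)), scal_sum. apply sum_eq. intros; ring.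
Qed.

Lemma expect2_ext f g : (forall j k, f j k = g j k) -> expect2 u v N f = expect2 u v N g.
Proof. intros Hfg. apply sum_eq. intros. apply sum_eq. intros. now rewrite Hfg. Qed.

Lemma expect2_sub f g :
  expect2 u v N (fun j k => f j k - g j k) = expect2 u v N f - expect2 u v N g.
Proof.
  unfold expect2. rewrite <- minus_sum. apply sum_eq. intros j _.
  rewrite <- minus_sum. apply sum_eq. intros; ring.
Qed.

Lemma expect2_const c : expect2 u v N (fun _ _ => c) = c.
Proof.
  rewrite (expect2_ext _ (fun j k => c * 1)) by (intros; ring).
  rewrite expect2_prod, (sum_eq (fun k => v k * 1) v) by (intros; ring).
  rewrite <- scal_sum, u_sum, v_sum. ring.
Qed.

Lemma expect2_ge_at_first_zero (F : nat -> nat -> R) (g : nat -> R) :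
  (forall j k, (j <= N)%nat -> (k <= N)%nat -> 0 <= F j k) ->
  (forall k, (k <= N)%nat -> g k <= F 0%nat k) ->
  u 0%nat * sum_f_R0 (fun k => v k * g k) N <= expect2 u v N F.
Proof.
  intros HF Hg. rewrite <- (sum_f_R0_delta0 u N), <- expect2_prod.
  apply expect2_le. intros j k Hj Hk. unfold delta0.
  destruct (Nat.eqb_spec j 0) as [->|]; [rewrite Rmult_1_l; auto | rewrite Rmult_0_l; auto].
Qed.

Variables (r : R) (wx wy : nat -> R).
Hypothesis r_pos : 0 < r.
Hypothesis wx_pos : forall j, (j <= N)%nat -> 0 < wx j.
Hypothesis wy_pos : forall k, (k <= N)%nat -> 0 < wy k.

Let A := expect2 u v N (mh_accept r wx wy).

Lemma mh_accept_nonneg j k : (j <= N)%nat -> (k <= N)%nat -> 0 <= mh_accept r wx wy j k.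
Proof.
  intros Hj Hk. apply Rmin_glb; [lra|]. apply Rlt_le, Rmult_lt_0_compat; [exact r_pos|].
  apply Rdiv_lt_0_compat; auto.
Qed.

Lemma expect2_mh_accept_bounds : 0 <= A <= 1.
Proof.
  split.
  - rewrite <- (expect2_const 0). apply expect2_le. intros. now apply mh_accept_nonneg.
  - rewrite <- (expect2_const 1). apply expect2_le. intros. apply Rmin_l.
Qed.

(* Both weights sit at their minimum with probability [u 0 * v 0]; otherwise the acceptance is
   at most [1]. *)
Lemma expect2_mh_accept_le :
  A <= 1 + r * (wy 0%nat / wx 0%nat) - u 0%nat * v 0%nat.
Proof.
  set (c := 1 + r * (wy 0%nat / wx 0%nat)).
  assert (Hc : 0 <= r * (wy 0%nat / wx 0%nat)).
  { apply Rlt_le, Rmult_lt_0_compat; [exact r_pos|].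
    apply Rdiv_lt_0_compat; [apply wy_pos | apply wx_pos]; lia. }
  replace (c - u 0%nat * v 0%nat) with
    (expect2 u v N (fun _ _ => c) - expect2 u v N (fun j k => delta0 j * delta0 k))
    by (rewrite expect2_const, expect2_prod, !sum_f_R0_delta0; reflexivity).
  unfold A. rewrite <- expect2_sub. apply expect2_le. intros j k _ _. unfold mh_accept, delta0, c.
  pose proof (Rmin_l 1 (r * (wy k / wx j))).
  destruct (Nat.eqb_spec j 0) as [->|]; destruct (Nat.eqb_spec k 0) as [->|]; try lra.
  pose proof (Rmin_r 1 (r * (wy 0%nat / wx 0%nat))). lra.
Qed.

Lemma expect2_mh_accept_ge_min (X ey : R) :
  (forall j, (j <= N)%nat -> wx j <= X) -> (forall k, (k <= N)%nat -> ey <= wy k) ->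
  0 <= ey -> Rmin 1 (r * (ey / X)) <= A.
Proof.
  intros HX Hey Hey0. rewrite <- (expect2_const (Rmin 1 (r * (ey / X)))).
  apply expect2_le. intros j k Hj Hk. apply Rle_min_compat_l, Rmult_le_compat_l; [lra|].
  specialize (wx_pos j Hj). specialize (HX j Hj). specialize (Hey k Hk).
  apply Rmult_le_compat; [lra | apply Rlt_le, Rinv_0_lt_compat; lra | lra |].
  apply Rinv_le_contravar; lra.
Qed.

Lemma mh_accept_first_ge L k : (k <= N)%nat -> L <= wy k ->
  Rmin 1 (r * (L / wx 0%nat)) <= mh_accept r wx wy 0%nat k.
Proof.
  intros Hk HL. apply Rle_min_compat_l, Rmult_le_compat_l; [lra|].
  apply Rmult_le_compat_r; [apply Rlt_le, Rinv_0_lt_compat, wx_pos; lia | exact HL].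
Qed.

Lemma expect2_mh_accept_ge_first_min (ey : R) :
  (forall k, (k <= N)%nat -> ey <= wy k) ->
  u 0%nat * Rmin 1 (r * (ey / wx 0%nat)) <= A.
Proof.
  intros Hey. eapply Rle_trans;
    [|apply (expect2_ge_at_first_zero _ (fun _ => Rmin 1 (r * (ey / wx 0%nat))))].
  - rewrite <- scal_sum, v_sum. right; ring.
  - exact mh_accept_nonneg.
  - intros k Hk. apply mh_accept_first_ge; auto.
Qed.

Lemma expect2_mh_accept_ge_first_jump (L : R) :
  (forall k, (1 <= k <= N)%nat -> L <= wy k) ->
  u 0%nat * ((1 - v 0%nat) * Rmin 1 (r * (L / wx 0%nat))) <= A.
Proof.
  intros HL. set (c := Rmin 1 (r * (L / wx 0%nat))).
  eapply Rle_trans; [|apply (expect2_ge_at_first_zero _ (fun k => c + (- c) * delta0 k))].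
  - rewrite sum_f_R0_affine_delta0, v_sum. right; unfold c; ring.
  - exact mh_accept_nonneg.
  - intros k Hk. unfold delta0. destruct (Nat.eqb_spec k 0) as [->|].
    + rewrite Rmult_1_r, Rplus_opp_r. now apply mh_accept_nonneg.
    + rewrite Rmult_0_r, Rplus_0_r. apply mh_accept_first_ge; [exact Hk | apply HL; lia].
Qed.

End Expect2.

Lemma binomial_C_nonneg n k : 0 <= Binomial.C n k.
Proof.
  unfold Binomial.C. apply Rmult_le_pos; [apply pos_INR|].
  apply Rlt_le, Rinv_0_lt_compat, Rmult_lt_0_compat; apply lt_0_INR, Factorial.lt_O_fact.
Qed.

Lemma binpmf_nonneg N p k : 0 <= p <= 1 -> 0 <= binpmf N p k.
Proof.
  intros Hp. unfold binpmf.
  apply Rmult_le_pos; [apply Rmult_le_pos|];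
    [apply binomial_C_nonneg | apply pow_le; lra | apply pow_le; lra].
Qed.

Lemma binpmf_sum N p : sum_f_R0 (binpmf N p) N = 1.
Proof.
  unfold binpmf. rewrite <- binomial. replace (p + (1 - p)) with 1 by ring. apply pow1.
Qed.

Lemma binpmf_le1 N p k : 0 <= p <= 1 -> (k <= N)%nat -> binpmf N p k <= 1.
Proof.
  intros Hp Hk. rewrite <- (binpmf_sum N p).
  apply sum_f_R0_term_le; [exact Hk | intro; now apply binpmf_nonneg].
Qed.

Lemma mean_bounds_atom0 (p w : nat -> R) N e L U :
  (forall k, (k <= N)%nat -> 0 <= p k) -> sum_f_R0 p N = 1 -> w 0%nat = e ->
  (forall k, (1 <= k <= N)%nat -> L <= w k <= U) ->
  p 0%nat * e + (1 - p 0%nat) * L <= sum_f_R0 (fun k => p k * w k) N <=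
  p 0%nat * e + (1 - p 0%nat) * U.
Proof.
  intros Hp Hsum Hw0 Hw.
  assert (Hatom : forall a, p 0%nat * e + (1 - p 0%nat) * a =
                       sum_f_R0 (fun k => p k * (a + (e - a) * delta0 k)) N).
  { intro a. rewrite sum_f_R0_affine_delta0, Hsum. ring. }
  rewrite !Hatom. split; apply sum_Rle; intros k Hk; apply Rmult_le_compat_l; auto;
    unfold delta0; destruct (Nat.eqb_spec k 0) as [->|]; try (rewrite Hw0; lra);
    specialize (Hw k ltac:(lia)); lra.
Qed.

Lemma eps_w_bounds x : (1 <= x)%nat -> 0 < eps_w x <= 1.
Proof.
  intros Hx. unfold eps_w.
  assert (H1 : 1 <= INR x ^ (3 - x mod 3)) by (apply pow_R1_Rle, (le_INR 1); lia).
  split; [apply Rinv_0_lt_compat; lra|].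
  rewrite <- Rinv_1. apply Rinv_le_contravar; lra.
Qed.

Lemma wval_zero N x : wval N x 0 = eps_w x.
Proof. unfold wval. simpl. ring. Qed.

Section Weights.

Variables N x : nat.
Hypothesis N_pos : (1 <= N)%nat.
Hypothesis x_pos : (1 <= x)%nat.

Lemma wval_between k : (k <= N)%nat -> eps_w x <= wval N x k <= INR x.
Proof.
  intros Hk. pose proof (eps_w_bounds x x_pos).
  assert (HN : 1 <= INR N) by (apply (le_INR 1); lia).
  assert (Hx : 1 <= INR x) by (apply (le_INR 1); lia).
  assert (Hfrac : 0 <= INR k / INR N <= 1).
  { split; [apply Rdiv_le_0_compat; [apply pos_INR | lra]|].
    apply Rmult_le_reg_r with (INR N); [lra|].
    unfold Rdiv. rewrite Rmult_assoc, Rinv_l, Rmult_1_r, Rmult_1_l by lra. now apply le_INR. }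
  unfold wval, b_w.
  replace ((INR x - eps_w x) / INR N * INR k) with ((INR x - eps_w x) * (INR k / INR N))
    by (unfold Rdiv; ring).
  assert (Hgap : 0 <= INR x - eps_w x) by lra.
  pose proof (Rmult_le_pos _ _ Hgap (proj1 Hfrac)).
  pose proof (Rmult_le_pos (INR x - eps_w x) (1 - INR k / INR N) Hgap ltac:(lra)).
  split; lra.
Qed.

Lemma wval_ge_jump k : (1 <= k)%nat -> (INR x - 1) / INR N <= wval N x k.
Proof.
  intros Hk. pose proof (eps_w_bounds x x_pos).
  assert (HN : 0 < / INR N) by (apply Rinv_0_lt_compat, lt_0_INR; lia).
  assert (Hx : 1 <= INR x) by (apply (le_INR 1); lia).
  assert (Hk1 : 1 <= INR k) by (apply (le_INR 1); lia).
  assert (Hgap : (INR x - 1) * / INR N <= (INR x - eps_w x) * / INR N)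
    by (apply Rmult_le_compat_r; lra).
  assert (Hscale : 0 <= (INR x - eps_w x) * / INR N * (INR k - 1))
    by (apply Rmult_le_pos; [apply Rmult_le_pos|]; lra).
  unfold wval, b_w, Rdiv. lra.
Qed.

Variable sx : R.
Hypothesis sx_prob : 0 <= sx <= 1.
Hypothesis mean_one : EW N x sx = 1.

(* A jump away from the atom [eps_w x] costs at least [(x - 1) / N], so it is rare. *)
Lemma atom_complement_le : (1 - binpmf N sx 0) * (INR x - 1) <= INR N.
Proof.
  assert (HN : 0 < INR N) by (apply lt_0_INR; lia).
  pose proof (eps_w_bounds x x_pos).
  destruct (mean_bounds_atom0 (binpmf N sx) (wval N x) N (eps_w x)
              ((INR x - 1) / INR N) (INR x)) as [Hlow _].
  - intros; now apply binpmf_nonneg.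
  - apply binpmf_sum.
  - apply wval_zero.
  - intros k Hk. split; [apply wval_ge_jump | apply wval_between]; lia.
  - unfold EW in mean_one. rewrite mean_one in Hlow.
    assert (Hpos : 0 <= binpmf N sx 0 * eps_w x)
      by (apply Rmult_le_pos; [now apply binpmf_nonneg | lra]).
    apply Rmult_le_reg_r with (/ INR N); [now apply Rinv_0_lt_compat|].
    rewrite Rinv_r by lra. unfold Rdiv in Hlow. lra.
Qed.

Lemma atom_complement_ge : 1 <= binpmf N sx 0 * eps_w x + (1 - binpmf N sx 0) * INR x.
Proof.
  destruct (mean_bounds_atom0 (binpmf N sx) (wval N x) N (eps_w x) (eps_w x) (INR x))
    as [_ Hup].
  - intros; now apply binpmf_nonneg.
  - apply binpmf_sum.
  - apply wval_zero.
  - intros k Hk. apply wval_between; lia.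
  - unfold EW in mean_one. now rewrite mean_one in Hup.
Qed.

End Weights.

Lemma mod3_succ i : ((i + 1) mod 3 = (i mod 3 + 1) mod 3)%nat.
Proof. now rewrite Nat.Div0.add_mod. Qed.

Lemma mod3_pred i : (1 <= i)%nat -> ((i - 1) mod 3 = (i mod 3 + 2) mod 3)%nat.
Proof.
  intros Hi. rewrite <- (Nat.Div0.mod_add (i - 1) 1 3).
  replace (i - 1 + 1 * 3)%nat with (i + 2)%nat by lia. now rewrite Nat.Div0.add_mod.
Qed.

Lemma eps_w_le_inv y : (1 <= y)%nat -> eps_w y <= / INR y.
Proof.
  intros Hy. unfold eps_w. assert (Hx : 1 <= INR y) by (apply (le_INR 1); lia).
  apply Rinv_le_contravar; [lra|].
  pose proof (Nat.mod_upper_bound y 3 ltac:(lia)).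
  replace (3 - y mod 3)%nat with (S (2 - y mod 3)) by lia. simpl.
  rewrite <- (Rmult_1_r (INR y)) at 1. apply Rmult_le_compat_l; [lra|].
  apply pow_R1_Rle. exact Hx.
Qed.

Lemma Rdiv_le_cross a b c d : 0 < b -> 0 < d -> a * d <= c * b -> a / b <= c / d.
Proof.
  intros Hb Hd H. apply Rmult_le_reg_r with (b * d); [nra|].
  replace (a / b * (b * d)) with (a * d) by (field; lra).
  replace (c / d * (b * d)) with (c * b) by (field; lra). exact H.
Qed.

Lemma eps_w_ratio_up i : (1 <= i)%nat -> (i mod 3 <> 2)%nat ->
  INR i / 4 <= eps_w (i + 1) / eps_w i.
Proof.
  intros Hi Hr. assert (Hx : 1 <= INR i) by (apply (le_INR 1); lia).
  unfold eps_w. rewrite mod3_succ, plus_INR. simpl (INR 1).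
  pose proof (Nat.mod_upper_bound i 3 ltac:(lia)).
  destruct (i mod 3) as [|[|]]; simpl; try lia.
  - replace (/ ((INR i + 1) * ((INR i + 1) * 1)) / / (INR i * (INR i * (INR i * 1))))
      with (INR i * INR i * INR i / ((INR i + 1) * (INR i + 1))) by (field; lra).
    apply Rdiv_le_cross; nra.
  - replace (/ ((INR i + 1) * 1) / / (INR i * (INR i * 1)))
      with (INR i * INR i / (INR i + 1)) by (field; lra).
    apply Rdiv_le_cross; nra.
Qed.

Lemma eps_w_ratio_down i : (2 <= i)%nat -> (i mod 3 <> 0)%nat ->
  eps_w (i - 1) / eps_w i <= 8 / INR i.
Proof.
  intros Hi Hr. assert (Hx : 2 <= INR i) by (apply (le_INR 2); lia).
  unfold eps_w. rewrite mod3_pred, minus_INR by lia. simpl (INR 1).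
  pose proof (Nat.mod_upper_bound i 3 ltac:(lia)).
  destruct (i mod 3) as [|[|[|]]]; simpl; try lia.
  - replace (/ ((INR i - 1) * ((INR i - 1) * ((INR i - 1) * 1))) / / (INR i * (INR i * 1)))
      with (INR i * INR i / ((INR i - 1) * (INR i - 1) * (INR i - 1))) by (field; lra).
    pose proof (pow_incr (INR i) (2 * (INR i - 1)) 3 ltac:(lra)) as Hcube. simpl in Hcube.
    apply Rdiv_le_cross; [|lra|]; nra.
  - replace (/ ((INR i - 1) * ((INR i - 1) * 1)) / / (INR i * 1))
      with (INR i / ((INR i - 1) * (INR i - 1))) by (field; lra).
    apply Rdiv_le_cross; [|lra|]; nra.
Qed.

(** * The noisy kernel as a birth-death chain *)

Definition mh_ratio (theta : R) (x y : nat) : R :=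
  (pi_t (Z.of_nat y) * q_prop theta (Z.of_nat y) (Z.of_nat x)) /
  (pi_t (Z.of_nat x) * q_prop theta (Z.of_nat x) (Z.of_nat y)).

Lemma accept_expect2 theta s N x y :
  accept theta s N x y =
  expect2 (binpmf N (s x)) (binpmf N (s y)) N
    (mh_accept (mh_ratio theta x y) (wval N x) (wval N y)).
Proof. reflexivity. Qed.

Definition up_rate theta s N (y : nat) : R :=
  if (1 <=? y)%nat then theta * accept theta s N y (y + 1) else 0.

Definition down_rate theta s N (y : nat) : R :=
  if (2 <=? y)%nat then (1 - theta) * accept theta s N y (y - 1) else 0.

Lemma q_prop_succ theta a : q_prop theta a (a + 1) = theta.
Proof. unfold q_prop. now rewrite Z.eqb_refl. Qed.

Lemma q_prop_pred theta a : q_prop theta a (a - 1) = 1 - theta.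
Proof.
  unfold q_prop. replace (a - 1 =? a + 1)%Z with false by (symmetry; apply Z.eqb_neq; lia).
  now rewrite Z.eqb_refl.
Qed.

Lemma PN_birth_death theta s N y z :
  PN theta s N y z = birth_death (up_rate theta s N) (down_rate theta s N) y z.
Proof.
  unfold birth_death, up_rate, down_rate. destruct y as [|y].
  - simpl. destruct z as [|[|z]]; simpl; ring.
  - unfold PN. replace (1 <=? S y)%nat with true by reflexivity.
    rewrite Nat2Z.inj_add, q_prop_succ.
    destruct (2 <=? S y)%nat eqn:Hy.
    + apply Nat.leb_le in Hy.
      rewrite Nat2Z.inj_sub, q_prop_pred by lia.
      replace (Nat.eqb z (S y - 1)) with (Nat.eqb (z + 1) (S y)); [reflexivity|].
      destruct (Nat.eqb_spec (z + 1) (S y)), (Nat.eqb_spec z (S y - 1)); lia.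
    + destruct (Nat.eqb z (S y + 1)), (Nat.eqb z (S y)), (Nat.eqb (z + 1) (S y)); simpl; ring.
Qed.

Lemma pi_t_pos_nat x : (1 <= x)%nat -> pi_t (Z.of_nat x) = (1/2) ^ x.
Proof.
  intros Hx. unfold pi_t. replace (0 <? Z.of_nat x)%Z with true by (symmetry; apply Z.ltb_lt; lia).
  now rewrite Nat2Z.id.
Qed.

Lemma mh_ratio_up theta x : 0 < theta < 1 -> (1 <= x)%nat ->
  mh_ratio theta x (x + 1) = (1 - theta) / (2 * theta).
Proof.
  intros Ht Hx. unfold mh_ratio.
  rewrite !pi_t_pos_nat, Nat2Z.inj_add, q_prop_succ by lia.
  replace (Z.of_nat x) with (Z.of_nat x + 1 - 1)%Z at 2 by lia. rewrite q_prop_pred.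
  rewrite pow_add. simpl. field. split; [lra | apply pow_nonzero; lra].
Qed.

Lemma mh_ratio_down theta x : 0 < theta < 1 -> (2 <= x)%nat ->
  mh_ratio theta x (x - 1) = 2 * theta / (1 - theta).
Proof.
  intros Ht Hx. unfold mh_ratio.
  rewrite !pi_t_pos_nat, Nat2Z.inj_sub, q_prop_pred by lia.
  replace (Z.of_nat x) with (Z.of_nat x - 1 + 1)%Z at 2 by lia. rewrite q_prop_succ.
  replace x with (x - 1 + 1)%nat at 2 by lia.
  rewrite pow_add. simpl. field. split; [lra | apply pow_nonzero; lra].
Qed.

Section NoisyChain.

Variables (N : nat) (s : nat -> R).
Hypothesis N_pos : (1 <= N)%nat.
Hypothesis s_prob : forall m, (1 <= m)%nat -> 0 <= s m <= 1.

Let atom x := binpmf N (s x) 0.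
Let acc r x y :=
  expect2 (binpmf N (s x)) (binpmf N (s y)) N (mh_accept r (wval N x) (wval N y)).

Lemma wval_pos x k : (1 <= x)%nat -> (k <= N)%nat -> 0 < wval N x k.
Proof.
  intros Hx Hk. pose proof (eps_w_bounds x Hx). pose proof (wval_between N x N_pos Hx k Hk). lra.
Qed.

Ltac acc_side_conditions :=
  first [ apply binpmf_sum
        | intros; apply binpmf_nonneg, s_prob; lia
        | intros; apply wval_pos; lia
        | lia ].

Lemma acc_bounds r x y : (1 <= x)%nat -> (1 <= y)%nat -> 0 < r -> 0 <= acc r x y <= 1.
Proof.
  intros Hx Hy Hr. apply expect2_mh_accept_bounds; auto; acc_side_conditions.
Qed.

Lemma acc_le r x y : (1 <= x)%nat -> (1 <= y)%nat -> 0 < r ->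
  acc r x y <= 1 + r * (eps_w y / eps_w x) - atom x * atom y.
Proof.
  intros Hx Hy Hr. rewrite <- (wval_zero N x), <- (wval_zero N y).
  apply expect2_mh_accept_le; auto; acc_side_conditions.
Qed.

Lemma acc_ge_min r x y : (1 <= x)%nat -> (1 <= y)%nat -> 0 < r ->
  Rmin 1 (r * (eps_w y / INR x)) <= acc r x y.
Proof.
  intros Hx Hy Hr. pose proof (eps_w_bounds y Hy).
  apply expect2_mh_accept_ge_min; auto; try acc_side_conditions; try lra.
  - intros j Hj. apply (wval_between N x N_pos Hx j Hj).
  - intros k Hk. apply (wval_between N y N_pos Hy k Hk).
Qed.

Lemma acc_ge_atom r x y : (1 <= x)%nat -> (1 <= y)%nat -> 0 < r ->
  atom x * Rmin 1 (r * (eps_w y / eps_w x)) <= acc r x y.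
Proof.
  intros Hx Hy Hr. rewrite <- (wval_zero N x).
  apply expect2_mh_accept_ge_first_min; auto; try acc_side_conditions.
  intros k Hk. apply (wval_between N y N_pos Hy k Hk).
Qed.

Lemma acc_ge_atom_jump r x y : (1 <= x)%nat -> (1 <= y)%nat -> 0 < r ->
  atom x * ((1 - atom y) * Rmin 1 (r * ((INR y - 1) / INR N / eps_w x))) <= acc r x y.
Proof.
  intros Hx Hy Hr. rewrite <- (wval_zero N x).
  apply expect2_mh_accept_ge_first_jump; auto; try acc_side_conditions.
  intros k Hk. apply wval_ge_jump; lia.
Qed.

Variable theta : R.
Hypothesis theta_range : 0 < theta < 1.

Let c_up := (1 - theta) / (2 * theta).
Let c_down := 2 * theta / (1 - theta).

Lemma c_up_pos : 0 < c_up.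
Proof. unfold c_up. apply Rdiv_lt_0_compat; lra. Qed.

Lemma c_down_pos : 0 < c_down.
Proof. unfold c_down. apply Rdiv_lt_0_compat; lra. Qed.

Lemma up_rate_acc x : (1 <= x)%nat -> up_rate theta s N x = theta * acc c_up x (x + 1).
Proof.
  intros Hx. unfold up_rate. replace (1 <=? x)%nat with true by (symmetry; apply Nat.leb_le; lia).
  now rewrite accept_expect2, mh_ratio_up.
Qed.

Lemma down_rate_acc x : (2 <= x)%nat -> down_rate theta s N x = (1 - theta) * acc c_down x (x - 1).
Proof.
  intros Hx. unfold down_rate.
  replace (2 <=? x)%nat with true by (symmetry; apply Nat.leb_le; lia).
  now rewrite accept_expect2, mh_ratio_down.
Qed.

Lemma up_rate_pos x : (1 <= x)%nat -> 0 < up_rate theta s N x <= theta.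
Proof.
  intros Hx. rewrite up_rate_acc by exact Hx.
  pose proof c_up_pos. pose proof (eps_w_bounds (x + 1) ltac:(lia)).
  assert (HINR : 0 < INR x) by (apply lt_0_INR; lia).
  pose proof (acc_bounds c_up x (x + 1) Hx ltac:(lia) c_up_pos).
  pose proof (acc_ge_min c_up x (x + 1) Hx ltac:(lia) c_up_pos).
  assert (0 < Rmin 1 (c_up * (eps_w (x + 1) / INR x))).
  { apply Rmin_glb_lt; [lra|]. apply Rmult_lt_0_compat; [lra|]. apply Rdiv_lt_0_compat; lra. }
  split; nra.
Qed.

Lemma up_rate_nonneg y : 0 <= up_rate theta s N y.
Proof.
  destruct (Nat.le_gt_cases 1 y) as [Hy|Hy].
  - now apply Rlt_le, up_rate_pos.
  - unfold up_rate. replace (1 <=? y)%nat with false by (symmetry; apply Nat.leb_gt; lia). lra.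
Qed.

Lemma down_rate_bounds y : 0 <= down_rate theta s N y <= 1 - theta.
Proof.
  destruct (Nat.le_gt_cases 2 y) as [Hy|Hy].
  - rewrite down_rate_acc by exact Hy.
    pose proof (acc_bounds c_down y (y - 1) ltac:(lia) ltac:(lia) c_down_pos). split; nra.
  - unfold down_rate. replace (2 <=? y)%nat with false by (symmetry; apply Nat.leb_gt; lia). lra.
Qed.

Lemma up_down_rate_le1 y : up_rate theta s N y + down_rate theta s N y <= 1.
Proof.
  pose proof (down_rate_bounds y).
  destruct (Nat.le_gt_cases 1 y) as [Hy|Hy].
  - pose proof (up_rate_pos y Hy). lra.
  - unfold up_rate, down_rate.
    replace (1 <=? y)%nat with false by (symmetry; apply Nat.leb_gt; lia).
    replace (2 <=? y)%nat with false by (symmetry; apply Nat.leb_gt; lia). lra.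
Qed.

Hypothesis mean_one : forall m, (1 <= m)%nat -> EW N m (s m) = 1.

Lemma atom_le1 y : (1 <= y)%nat -> 0 <= atom y <= 1.
Proof.
  intros Hy. split; [apply binpmf_nonneg | apply binpmf_le1]; try apply s_prob; lia.
Qed.

Lemma atom_complement_le_inv y x : (1 <= y)%nat -> 0 < x -> x <= 2 * (INR y - 1) ->
  1 - atom y <= 2 * INR N / x.
Proof.
  intros Hy Hx Hxy. pose proof (atom_le1 y Hy).
  pose proof (atom_complement_le N y N_pos Hy (s y) (s_prob y Hy) (mean_one y Hy)) as Hjump.
  fold (atom y) in Hjump.
  apply Rmult_le_reg_r with x; [exact Hx|].
  replace (2 * INR N / x * x) with (2 * INR N) by (field; lra). nra.
Qed.

Lemma atom_complement_ge_inv y : (2 <= y)%nat -> / (2 * INR y) <= 1 - atom y.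
Proof.
  intros Hy. pose proof (atom_le1 y ltac:(lia)).
  assert (Hx : 2 <= INR y) by (apply (le_INR 2); lia).
  pose proof (atom_complement_ge N y N_pos ltac:(lia) (s y) (s_prob y ltac:(lia))
                (mean_one y ltac:(lia))) as Hmass.
  fold (atom y) in Hmass.
  pose proof (eps_w_le_inv y ltac:(lia)). pose proof (eps_w_bounds y ltac:(lia)).
  assert (Hinv : / INR y <= / 2) by (apply Rinv_le_contravar; lra).
  rewrite Rinv_mult. apply Rmult_le_reg_r with (INR y); [lra|].
  replace (/ 2 * / INR y * INR y) with (/ 2) by (field; lra). nra.
Qed.

Section LargeStates.

Variable i : nat.
Hypothesis i_large : 4 * INR N + 4 <= INR i.
Hypothesis i_large_up : 4 <= c_up * INR i.

Lemma large_state_ge8 : (8 <= i)%nat.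
Proof.
  apply INR_le. assert (1 <= INR N) by (apply (le_INR 1); lia). simpl. lra.
Qed.

Lemma atoms_near_one : 1 - atom i <= 2 * INR N / INR i /\ 1 - atom (i - 1) <= 2 * INR N / INR i.
Proof.
  pose proof large_state_ge8. assert (1 <= INR N) by (apply (le_INR 1); lia).
  split; apply atom_complement_le_inv; try lia; try lra.
  rewrite minus_INR by lia. simpl. lra.
Qed.

Lemma atom_ge_half : / 2 <= atom i.
Proof.
  destruct atoms_near_one as [Ha _]. assert (1 <= INR N) by (apply (le_INR 1); lia).
  enough (2 * INR N / INR i <= / 2) by lra.
  apply Rmult_le_reg_r with (INR i); [lra|].
  replace (2 * INR N / INR i * INR i) with (2 * INR N) by (field; lra). lra.
Qed.

Lemma up_rate_ge_half : (i mod 3 <> 2)%nat -> theta / 2 <= up_rate theta s N i.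
Proof.
  intros Hr. pose proof large_state_ge8. pose proof c_up_pos.
  rewrite up_rate_acc by lia.
  pose proof (acc_ge_atom c_up i (i + 1) ltac:(lia) ltac:(lia) c_up_pos) as Hacc.
  rewrite Rmin_left in Hacc.
  - pose proof atom_ge_half. nra.
  - pose proof (eps_w_ratio_up i ltac:(lia) Hr). nra.
Qed.

Lemma up_rate_ge_inv : (i mod 3 = 2)%nat -> theta / (8 * INR i) <= up_rate theta s N i.
Proof.
  intros Hr. pose proof large_state_ge8. pose proof c_up_pos.
  assert (HN : 1 <= INR N) by (apply (le_INR 1); lia).
  assert (Hx : 8 <= INR i) by lra.
  rewrite up_rate_acc by lia.
  pose proof (acc_ge_atom_jump c_up i (i + 1) ltac:(lia) ltac:(lia) c_up_pos) as Hacc.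
  rewrite plus_INR in Hacc. simpl (INR 1) in Hacc.
  rewrite Rmin_left in Hacc.
  - pose proof atom_ge_half.
    pose proof (atom_complement_ge_inv (i + 1) ltac:(lia)) as Hjump.
    rewrite plus_INR in Hjump. simpl (INR 1) in Hjump.
    assert (/ (8 * INR i) <= / 2 * / (2 * (INR i + 1))).
    { rewrite <- Rinv_mult. apply Rinv_le_contravar; lra. }
    assert (0 <= / (2 * (INR i + 1))) by (apply Rlt_le, Rinv_0_lt_compat; lra).
    assert (/ 2 * / (2 * (INR i + 1)) <= atom i * (1 - atom (i + 1)))
      by (apply Rmult_le_compat; lra).
    unfold Rdiv at 1. apply Rmult_le_compat_l; lra.
  - unfold eps_w. rewrite Hr. simpl.
    replace (c_up * ((INR i + 1 - 1) / INR N / / (INR i * 1))) with (c_up * INR i * (INR i / INR N))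
      by (field; lra).
    assert (1 <= INR i / INR N) by (apply Rle_div_r; lra). nra.
Qed.

Lemma down_rate_le_inv : (i mod 3 <> 0)%nat ->
  down_rate theta s N i <= (1 - theta) * ((4 * INR N + 8 * c_down) / INR i).
Proof.
  intros Hr. pose proof large_state_ge8. pose proof c_down_pos.
  rewrite down_rate_acc by lia. apply Rmult_le_compat_l; [lra|].
  pose proof (acc_le c_down i (i - 1) ltac:(lia) ltac:(lia) c_down_pos).
  pose proof (eps_w_ratio_down i ltac:(lia) Hr).
  destruct atoms_near_one.
  pose proof (atom_le1 i ltac:(lia)). pose proof (atom_le1 (i - 1) ltac:(lia)).
  assert (Hsplit : (4 * INR N + 8 * c_down) / INR i =
                   2 * INR N / INR i + 2 * INR N / INR i + c_down * (8 / INR i))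
    by (field; pose proof (le_INR 8 i ltac:(lia)); simpl in *; lra).
  rewrite Hsplit. nra.
Qed.

Let K := 4 * INR N + 8 * c_down.
Let B := 8 * (1 - theta) * (K + 1) / theta.

Lemma down_up_ratio_large :
  down_rate theta s N i / up_rate theta s N i <= B /\
  ((i mod 3 = 1)%nat -> down_rate theta s N i / up_rate theta s N i <= B / INR i).
Proof.
  pose proof large_state_ge8. pose proof c_down_pos.
  assert (Hx : 8 <= INR i) by (apply (le_INR 8) in H; simpl in H; lra).
  assert (HK : 0 <= K) by (unfold K; pose proof (pos_INR N); lra).
  assert (HBt : B * theta = 8 * (1 - theta) * (K + 1)) by (unfold B; field; lra).
  assert (HB0 : 0 <= B) by (unfold B; apply Rdiv_le_0_compat; nra).
  assert (HBx : B / INR i <= B) by (apply Rle_div_l; [lra | nra]).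
  destruct (up_rate_pos i ltac:(lia)) as [Hup _].
  destruct (down_rate_bounds i) as [Hdn0 Hdn1].
  assert (Hratio : forall M, down_rate theta s N i <= M * up_rate theta s N i ->
                   down_rate theta s N i / up_rate theta s N i <= M)
    by (intros M HM; apply Rle_div_l; lra).
  pose proof (Nat.mod_upper_bound i 3 ltac:(lia)).
  destruct (i mod 3) as [|[|[|]]] eqn:Hr; try lia.
  - split; [|lia]. apply Hratio.
    pose proof (up_rate_ge_half ltac:(lia)) as Hup_large.
    assert (B * (theta / 2) <= B * up_rate theta s N i) by (apply Rmult_le_compat_l; lra).
    assert (B * (theta / 2) = 4 * (1 - theta) * (K + 1)) by lra.
    nra.
  - pose proof (up_rate_ge_half ltac:(lia)) as Hup_large.
    pose proof (down_rate_le_inv ltac:(lia)) as Hdn_small. fold K in Hdn_small.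
    assert (Hsmall : down_rate theta s N i <= B / INR i * up_rate theta s N i).
    { eapply Rle_trans; [exact Hdn_small|].
      apply Rle_trans with (B / INR i * (theta / 2));
        [|apply Rmult_le_compat_l; [apply Rdiv_le_0_compat|]; lra].
      replace (B / INR i * (theta / 2)) with (B * theta / 2 / INR i) by (field; lra).
      rewrite HBt. unfold Rdiv. rewrite <- Rmult_assoc. apply Rmult_le_compat_r.
      - apply Rlt_le, Rinv_0_lt_compat; lra.
      - nra. }
    split; [apply Hratio; nra|]. intros _. now apply Hratio.
  - split; [|lia]. apply Hratio.
    pose proof (up_rate_ge_inv ltac:(lia)) as Hup_small.
    pose proof (down_rate_le_inv ltac:(lia)) as Hdn_small. fold K in Hdn_small.
    eapply Rle_trans; [exact Hdn_small|].
    apply Rle_trans with (B * (theta / (8 * INR i))); [|apply Rmult_le_compat_l; lra].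
    replace (B * (theta / (8 * INR i))) with (B * theta / 8 / INR i) by (field; lra).
    rewrite HBt. unfold Rdiv. rewrite <- Rmult_assoc. apply Rmult_le_compat_r.
    + apply Rlt_le, Rinv_0_lt_compat; lra.
    + nra.
Qed.

End LargeStates.

Lemma chain_down_up_product_summable m : (1 <= m)%nat ->
  ex_series (down_up_product (up_rate theta s N) (down_rate theta s N) m).
Proof.
  intros Hm.
  destruct (INR_unbounded (4 / c_up)) as [K0 HK0].
  pose proof c_up_pos.
  set (I0 := Nat.max (4 * N + 4) K0).
  assert (Hlarge : forall i, (I0 <= i)%nat -> 4 * INR N + 4 <= INR i /\ 4 <= c_up * INR i).
  { intros i Hi. split.
    - replace (4 * INR N + 4) with (INR (4 * N + 4)) by (rewrite plus_INR, mult_INR; simpl; ring).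
      apply le_INR. lia.
    - assert (INR K0 <= INR i) by (apply le_INR; lia).
      replace 4 with (c_up * (4 / c_up)) at 1 by (field; lra).
      apply Rmult_le_compat_l; lra. }
  apply (down_up_product_summable _ _ (fun y => proj1 (down_rate_bounds y)) m
           (fun y Hy => proj1 (up_rate_pos y ltac:(lia))) I0
           (8 * (1 - theta) * (4 * INR N + 8 * c_down + 1) / theta)).
  - intros i Hi. destruct (Hlarge i Hi) as [H1 H2]. apply (down_up_ratio_large i H1 H2).
  - intros i Hi. destruct (Hlarge i Hi) as [H1 H2]. apply (down_up_ratio_large i H1 H2).
Qed.

End NoisyChain.

Theorem proposition3p14 (theta : R) (s : nat -> R) :
  0 < theta < 1 ->
  (forall m : nat, (1 <= m)%nat -> 0 <= s m <= 1) ->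
  (forall m N : nat, (1 <= m)%nat -> (1 <= N)%nat -> EW N m (s m) = 1) ->
  forall N : nat, (1 <= N)%nat -> transient_chain (PN theta s N).
Proof.
  intros Htheta Hs Hmean N HN m Hm.
  set (u := up_rate theta s N). set (d := down_rate theta s N).
  apply (ex_series_ext (fun n => nstep (birth_death u d) n m m)).
  { intro n. symmetry. apply nstep_ext, PN_birth_death. }
  apply birth_death_transient.
  - exact (up_rate_nonneg N s HN Hs theta Htheta).
  - intro y. exact (proj1 (down_rate_bounds N s HN Hs theta Htheta y)).
  - exact (up_down_rate_le1 N s HN Hs theta Htheta).
  - reflexivity.
  - intros y Hy. apply (up_rate_pos N s HN Hs theta Htheta). lia.
  - exact (chain_down_up_product_summable N s HN Hs theta Htheta
             (fun k Hk => Hmean k N Hk HN) m Hm).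
Qed.
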